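(* Let $S$ be a non-empty poset and $(\mathcal{L},\rightharpoonup)=(L,\wedge,\vee,0,1)$ a complete lattice with an $S$-action. If $\mathcal{L}$ is multiplication, then $\mathcal{L}$ is $Spec^p(\mathcal{L})$-top; that is, with $X=Spec^p(\mathcal{L})$ and $V(a)=\{p\in X: a\leq p\}$ for $a\in L$, the family $\{V(a): a\in L\}$ is closed under finite unions.
   Context: An $S$-action on a lattice $(L,\wedge,\vee)$ is a map $\rightharpoonup:S\times L\to L$ such that $s_1\leq s_2\Rightarrow s_1\rightharpoonup x\leq s_2\rightharpoonup x$; $x\leq y\Rightarrow s\rightharpoonup x\leq s\rightharpoonup y$; and $s\rightharpoonup x\leq x$. The bounded lattice with $S$-action is multiplication iff every $x\in L$ equals $s\rightharpoonup 1$ for some $s\in S$. An element $x\in L\setminus\{1\}$ is prime iff for all $y\in L$ and $s\in S$: $s\rightharpoonup y\leq x$ implies $s\rightharpoonup 1\leq x$ or $y\leq x$; $Spec^p(\mathcal{L})$ is the set of prime elements. *)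

From mathcomp Require Import all_boot all_order.
Set Implicit Arguments. Unset Strict Implicit. Unset Printing Implicit Defensive.
Import Order.TTheory.
Local Open Scope order_scope.

Definition is_S_action (dS dL : Order.disp_t) (S : porderType dS)
  (L : latticeType dL) (act : S -> L -> L) : Prop :=
  [/\ (forall (s1 s2 : S) (x : L), s1 <= s2 -> act s1 x <= act s2 x),
      (forall (s : S) (x y : L), x <= y -> act s x <= act s y) &
      (forall (s : S) (x : L), act s x <= x)].

Definition complete_lattice (dL : Order.disp_t) (L : tbLatticeType dL) : Prop :=
  forall A : L -> Prop, exists s : L,
    (forall x, A x -> x <= s) /\ (forall u, (forall x, A x -> x <= u) -> s <= u).

Definition multiplication (dS dL : Order.disp_t) (S : porderType dS)
  (L : tbLatticeType dL) (act : S -> L -> L) : Prop :=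
  forall x : L, exists s : S, x = act s \top.

Definition prime_elt (dS dL : Order.disp_t) (S : porderType dS)
  (L : tbLatticeType dL) (act : S -> L -> L) (x : L) : Prop :=
  x != \top /\
  forall (y : L) (s : S), act s y <= x -> act s \top <= x \/ y <= x.

Definition Vset (dS dL : Order.disp_t) (S : porderType dS)
  (L : tbLatticeType dL) (act : S -> L -> L) (a : L) : L -> Prop :=
  fun p => prime_elt act p /\ a <= p.

(* L is X-top for X = Spec^p(L): {V a | a in L} closed under finite unions
   (empty union and binary unions) *)
Definition Specp_top (dS dL : Order.disp_t) (S : porderType dS)
  (L : tbLatticeType dL) (act : S -> L -> L) : Prop :=
  (exists c : L, forall p, ~ Vset act c p) /\
  (forall a b : L, exists c : L, forall p,
      Vset act c p <-> (Vset act a p \/ Vset act b p)).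

From mathcomp Require Import all_boot all_order.
Import Order.TTheory.
Local Open Scope order_scope.

(* Since no prime lies above 1, V(1) is empty. For binary unions take
   V(a) ∪ V(b) = V(a ∧ b): writing a = s ⇀ 1, the element s ⇀ b lies below
   both a and b, so a prime p above a ∧ b satisfies s ⇀ 1 ≤ p or b ≤ p. *)

Section PrimeElements.

Variables (dS dL : Order.disp_t) (S : porderType dS) (L : tbLatticeType dL).
Variable act : S -> L -> L.

Lemma Vset_top (p : L) : ~ Vset act \top p.
Proof. by move=> [[+ _] top_p]; rewrite eq_le lex1 top_p. Qed.

Lemma VsetIl (a b p : L) : Vset act a p -> Vset act (a `&` b) p.
Proof. by move=> [pp ap]; split=> //; apply: le_trans ap; apply: leIl. Qed.

Lemma VsetIr (a b p : L) : Vset act b p -> Vset act (a `&` b) p.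
Proof. by move=> [pp bp]; split=> //; apply: le_trans bp; apply: leIr. Qed.

Hypothesis act_monor : forall (s : S) (x y : L), x <= y -> act s x <= act s y.
Hypothesis act_le : forall (s : S) (x : L), act s x <= x.

Lemma act_le_act_topI (s : S) (b : L) : act s b <= act s \top `&` b.
Proof. by rewrite lexI act_le andbT act_monor ?lex1. Qed.

Hypothesis act_mult : multiplication act.

Lemma prime_eltI {a b p : L} :
  prime_elt act p -> a `&` b <= p -> a <= p \/ b <= p.
Proof.
move=> [_ p_prime]; have [s ->] := act_mult a => abp.
exact/p_prime/(le_trans (act_le_act_topI s b) abp).
Qed.

Lemma VsetI (a b p : L) :
  Vset act (a `&` b) p <-> Vset act a p \/ Vset act b p.
Proof.
split; last by case=> [/VsetIl | /VsetIr].
by move=> [pp /(prime_eltI pp)] [ap | bp]; [left | right].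
Qed.

End PrimeElements.

Theorem mainTheorem9 (dS : Order.disp_t) (S : porderType dS)
  (dL : Order.disp_t) (L : tbLatticeType dL) (act : S -> L -> L) :
  inhabited S ->
  complete_lattice L ->
  is_S_action act ->
  multiplication act ->
  Specp_top act.
Proof.
move=> _ _ [_ act_monor act_le] act_mult; split.
  by exists \top; apply: Vset_top.
by move=> a b; exists (a `&` b) => p; exact: VsetI act_monor act_le act_mult _ _ _.
Qed.
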